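(* Let $\mathcal{P}$ be a collection of cells with maximal rectangles $\mathcal{B}_1,\dots,\mathcal{B}_p$. Then there exists $i\in[p]$ such that $\overline{\mathcal{B}_i}=\mathcal{B}_i\setminus\bigcup_{j\in[p]\setminus\{i\}}\mathcal{B}_j\neq\emptyset$.
   Context: A cell is $[a,a+(1,1)]\subset\mathbb{R}^2$ with $a\in\mathbb{Z}^2$ its lower left corner; a collection of cells is a non-empty finite set of cells. For lower left corners $a\le b$ (componentwise), the rectangle $[A,B]$ is the set of cells whose lower left corner $c$ satisfies $a\le c\le b$. A maximal rectangle of $\mathcal{P}$ is a rectangle all of whose cells lie in $\mathcal{P}$ and not properly contained in another such rectangle. *)

From mathcomp Require Import all_boot all_order all_algebra.
Set Implicit Arguments. Unset Strict Implicit. Unset Printing Implicit Defensive.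
Import Order.TTheory GRing.Theory Num.Theory.
Local Open Scope ring_scope.

(* A cell [a, a+(1,1)] is identified with its lower left corner a in Z^2. *)
Definition cell := (int * int)%type.

Definition cle (a b : cell) : bool := (a.1 <= b.1) && (a.2 <= b.2).

Definition in_rect (a b c : cell) : bool := cle a c && cle c b.

Definition rect_in (P : seq cell) (a b : cell) : Prop :=
  cle a b /\ forall c, in_rect a b c -> c \in P.

Definition maximal_rect (P : seq cell) (a b : cell) : Prop :=
  rect_in P a b /\
  forall a' b', rect_in P a' b' ->
    (forall c, in_rect a b c -> in_rect a' b' c) ->
    (forall c, in_rect a' b' c -> in_rect a b c).

From mathcomp Require Import all_boot all_order all_algebra.
From mathcomp Require Import zify.
Set Implicit Arguments.
Unset Strict Implicit.
Unset Printing Implicit Defensive.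
Import Order.TTheory GRing.Theory Num.Theory.
Local Open Scope ring_scope.

(* Let x0 be the leftmost column of P and r the largest abscissa such that
   every cell of column x0 extends horizontally through r; some cell c of
   column x0 then has (r+1, c.2) outside P.  Let [lo, hi] be the vertical run
   of column x0 through c.  The rectangle [(x0, lo), (r, hi)] lies in P, and
   any rectangle in P containing c is inside it: it cannot reach left of x0,
   nor contain (r+1, c.2), (x0, lo-1) or (x0, hi+1).  So this rectangle is
   maximal and is the only maximal rectangle containing c. *)

Lemma exists_argmin (T : eqType) (d : Order.disp_t) (R : orderType d)
    (f : T -> R) (s : seq T) :
  s != [::] -> exists2 x, x \in s & forall y, y \in s -> (f x <= f y)%O.
Proof.
case: s => // x s _; elim: s x => [|z s IH] x.
  by exists x => [|y]; rewrite mem_seq1 // => /eqP->.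
have [m ms min_m] := IH z.
have [fxm|fmx] := leP (f x) (f m).
  exists x => [|y]; first exact: mem_head.
  rewrite inE => /predU1P[->//|ys]; exact/(le_trans fxm)/min_m.
exists m => [|y]; first by rewrite inE ms orbT.
rewrite inE => /predU1P[->|]; [exact: ltW | exact: min_m].
Qed.

Lemma cells_bounded (P : seq cell) :
  exists M : int, forall c, c \in P -> (`|c.1| <= M) && (`|c.2| <= M).
Proof.
elim: P => [|[x1 x2] P [M bound]]; first by exists 0.
exists (`|M| + `|x1| + `|x2|) => -[c1 c2].
by rewrite inE => /predU1P[[-> ->]|/bound] /=; lia.
Qed.

Lemma maximal_interval_up (S : pred int) (M y : int) :
  (forall z, S z -> z <= M) -> S y ->
  exists hi, [/\ y <= hi, forall z, y <= z <= hi -> S z & ~~ S (hi + 1)].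
Proof.
move=> bound; move: {2}`|M - y|%N (leqnn `|M - y|%N) => n.
elim: n y => [|n IH] y le_My Sy.
  exists y; split=> [|z yz|]; first lia; first by have ->: z = y by lia.
  by apply/negP => /bound; move: (bound y Sy); lia.
case Sy1: (S (y + 1)).
  have [|hi [y1_hi Shi nShi]] := IH (y + 1) _ Sy1.
    by move: (bound _ Sy1); lia.
  exists hi; split=> [|z yz|//]; first lia.
  by have [->//|zy] := eqVneq z y; apply: Shi; lia.
by exists y; rewrite Sy1; split=> // z yz; have ->: z = y by lia.
Qed.

Lemma maximal_interval (S : pred int) (M y : int) :
  (forall z, S z -> `|z| <= M) -> S y ->
  exists lo hi, [/\ lo <= y <= hi, forall z, lo <= z <= hi -> S z,
                    ~~ S (lo - 1) & ~~ S (hi + 1)].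
Proof.
move=> bound Sy.
have [|hi [y_hi Shi nShi]] := @maximal_interval_up S M y _ Sy.
  by move=> z /bound; lia.
have [||nlo [y_nlo Slo nSlo]] := @maximal_interval_up (S \o -%R) M (- y).
- by move=> z /bound /=; lia.
- by rewrite /= opprK.
exists (- nlo), hi; split=> [|z z_in||//]; first lia.
  have [le_zy|le_yz] := lerP z y; last by apply: Shi; lia.
  by rewrite -[z]opprK; apply: Slo; lia.
by move: nSlo; rewrite /= opprD.
Qed.

Lemma in_rect_corners (a b : cell) : cle a b -> in_rect a b a && in_rect a b b.
Proof. by case: a b => [a1 a2] [b1 b2]; rewrite /in_rect /cle /=; lia. Qed.

Lemma in_rect_sub (a b a' b' c : cell) :
  cle a a' -> cle b' b -> in_rect a' b' c -> in_rect a b c.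
Proof.
case: a b a' b' c => [? ?] [? ?] [? ?] [? ?] [? ?].
by rewrite /in_rect /cle /=; lia.
Qed.

Lemma rect_subset_corners (a b a' b' : cell) : cle a b ->
  (forall c, in_rect a b c -> in_rect a' b' c) -> cle a' a && cle b b'.
Proof.
move=> ab sub; have /andP[/sub a_in /sub b_in] := in_rect_corners ab.
by move: a_in b_in; rewrite /in_rect => /andP[-> _] /andP[_ ->].
Qed.

Lemma cle_anti (a b : cell) : cle a b -> cle b a -> a = b.
Proof.
by case: a b => [a1 a2] [b1 b2]; rewrite /cle /= => ? ?; congr pair; lia.
Qed.

Lemma dominating_rect_maximal (P : seq cell) (a b c : cell) :
  rect_in P a b -> in_rect a b c ->
  (forall a' b', rect_in P a' b' -> in_rect a' b' c -> cle a a' && cle b' b) ->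
  maximal_rect P a b /\
  forall a' b', maximal_rect P a' b' -> in_rect a' b' c -> (a', b') = (a, b).
Proof.
move=> abP c_in dom.
have sub_dom a' b' : rect_in P a' b' -> in_rect a' b' c ->
    forall e, in_rect a' b' e -> in_rect a b e.
  by move=> a'b'P /(dom _ _ a'b'P) /andP[aa' b'b] e; apply: in_rect_sub aa' b'b.
split=> [|a' b' [a'b'P max'] c_in'].
  by split=> // a' b' a'b'P sub; apply/sub_dom/sub.
have /andP[a'a bb'] :=
  rect_subset_corners abP.1 (max' a b abP (sub_dom _ _ a'b'P c_in')).
have /andP[aa' b'b] := dom _ _ a'b'P c_in'.
by rewrite (cle_anti a'a aa') (cle_anti b'b bb').
Qed.

Lemma rect_in_blocked (P : seq cell) (x0 y lo hi r : int) (a b : cell) :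
  (forall e, e \in P -> x0 <= e.1) -> in_rect (x0, lo) (r, hi) (x0, y) ->
  (r + 1, y) \notin P -> (x0, lo - 1) \notin P -> (x0, hi + 1) \notin P ->
  rect_in P a b -> in_rect a b (x0, y) -> cle (x0, lo) a && cle b (r, hi).
Proof.
case: a b => [a1 a2] [b1 b2] x0_min + nPr nPlo nPhi [ab inP].
rewrite /in_rect /cle /= => c_in_R c_in.
have inP_xy x z : a1 <= x <= b1 -> a2 <= z <= b2 -> (x, z) \in P.
  by move=> ? ?; apply: inP; rewrite /in_rect /cle /=; lia.
have := x0_min _ (inP_xy a1 a2 ltac:(lia) ltac:(lia)) => /= x0_a1.
have b1_r : b1 <= r.
  by rewrite leNgt; apply: contraNN _ nPr => ?; apply: inP_xy; lia.
have lo_a2 : lo <= a2.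
  by rewrite leNgt; apply: contraNN _ nPlo => ?; apply: inP_xy; lia.
have b2_hi : b2 <= hi.
  by rewrite leNgt; apply: contraNN _ nPhi => ?; apply: inP_xy; lia.
lia.
Qed.

Lemma exists_dominating_rect (P : seq cell) : P != [::] ->
  exists a b c, [/\ rect_in P a b, in_rect a b c &
    forall a' b', rect_in P a' b' -> in_rect a' b' c -> cle a a' && cle b' b].
Proof.
move=> nP; have [M bound] := cells_bounded P.
have [p pP x0_min] := exists_argmin (fun c : cell => c.1) nP.
set x0 := p.1 in x0_min.
pose column_reaches x :=
  all (fun d : cell => (d.1 != x0) || ((x, d.2) \in P)) P.
have reach_col d x : d \in P -> d.1 = x0 -> column_reaches x -> (x, d.2) \in P.
  by move=> dP dx /allP/(_ d dP); rewrite dx eqxx.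
have [r [x0_r reach nreach]] : exists r, [/\ x0 <= r,
    forall x, x0 <= x <= r -> column_reaches x & ~~ column_reaches (r + 1)].
  apply: (maximal_interval_up (M := M)) => [x|].
    by move/(reach_col p x pP erefl)/bound => /=; lia.
  by apply/allP => -[d1 d2] dP /=; case: eqP => // <-.
have /hasP[[x d] dP /=] :
    has (fun d : cell => (d.1 == x0) && ((r + 1, d.2) \notin P)) P.
  move: nreach; rewrite -has_predC; apply: sub_has => e /=.
  by rewrite negb_or negbK.
move=> /andP[/eqP dx nPr]; rewrite {x}dx in dP.
have [|lo [hi [d_in col nPlo nPhi]]] :=
    @maximal_interval (fun y => (x0, y) \in P) M d _ dP.
  by move=> y /bound /=; lia.
exists (x0, lo), (r, hi), (x0, d); split.
- split=> [|[x y]]; rewrite /in_rect /cle /=; first lia.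
  move=> xy_in; apply: (reach_col (x0, y)) => //.
    by apply: col; lia.
  by apply: reach; lia.
- by rewrite /in_rect /cle /=; lia.
- by move=> a' b'; apply: rect_in_blocked; rewrite // /in_rect /cle /=; lia.
Qed.

Theorem proposition2p6 (P : seq cell) (hP : P != [::]) :
  exists a b : cell, maximal_rect P a b /\
    exists c : cell, in_rect a b c /\
      forall a' b' : cell, maximal_rect P a' b' -> (a', b') <> (a, b) ->
        ~~ in_rect a' b' c.
Proof.
have [a [b [c [abP c_in dom]]]] := exists_dominating_rect hP.
have [max_ab unique_ab] := dominating_rect_maximal abP c_in dom.
exists a, b; split=> //; exists c; split=> // a' b' max' neq.
by apply/negP => c_in'; apply/neq/unique_ab.
Qed.
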